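(* Fix $\epsilon>0$ and define \[U_1:=\left\{(a,b)\in\bigl([0,1/2)\times[1/2,1)\bigr)\cup\bigl([1/2,1)\times[0,1/2)\bigr):\ a+b<\tfrac34\right\},\] \[U_2:=\left\{(a,b)\in[0,1/2)\times[0,1):\ \tfrac34+\epsilon<a+b<\tfrac54\right\},\] $U:=U_1\cup U_2$ and $S_\epsilon:=\pi(U)\subset\mathbb{T}^2$. Let $\theta_x,\theta_z\in S_\epsilon$ and $\theta_y\in\mathbb{T}^2$ satisfy $2\theta_y=\theta_x+\theta_z$, and write $d:=\frac{\pi^{-1}(\theta_z)-\pi^{-1}(\theta_x)}{2}\in\mathbb{R}^2$. If $|d_1+d_2|\le\epsilon/1000$, then \[(1-\{p(\theta_x)\})^2+(1-\{p(\theta_z)\})^2-2(1-\{p(\theta_y)\})^2\ge 2d_1^2.\]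
   Context: $\mathbb{T}^2:=(\mathbb{R}/\mathbb{Z})^2$. $\pi:\mathbb{R}^2\to\mathbb{T}^2$, $x\mapsto x+\mathbb{Z}^2$, and for $\theta\in\mathbb{T}^2$, $\pi^{-1}(\theta)$ denotes the unique $x\in[0,1)^2$ with $\pi(x)=\theta$. The projection $p:\mathbb{T}^2\to[0,1)$ is $p(\theta)=\pi^{-1}(\theta)_1$. For $x\in[0,1)$, $\{x\}:=x$ if $x\in[0,1/2)$ and $\{x\}:=x-1/2$ otherwise (this is not the usual fractional part). *)

From Stdlib Require Import Reals Lra.
Open Scope R_scope.

(* The torus T^2 = (R/Z)^2, represented by its canonical representatives
   in [0,1)^2. *)
Record T2 : Type := mkT2 {
  t1 : R; t2 : R;
  t1_ge0 : 0 <= t1; t1_lt1 : t1 < 1;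
  t2_ge0 : 0 <= t2; t2_lt1 : t2 < 1 }.

Lemma frac_ge0 (r : R) : 0 <= frac_part r.
Proof. destruct (base_fp r) as [H _]. lra. Qed.
Lemma frac_lt1 (r : R) : frac_part r < 1.
Proof. destruct (base_fp r) as [_ H]. exact H. Qed.

Definition pi (x : R * R) : T2 :=
  mkT2 (frac_part (fst x)) (frac_part (snd x))
       (frac_ge0 _) (frac_lt1 _) (frac_ge0 _) (frac_lt1 _).

Definition pi_inv (th : T2) : R * R := (t1 th, t2 th).

Definition tadd (a b : T2) : T2 :=
  pi (fst (pi_inv a) + fst (pi_inv b), snd (pi_inv a) + snd (pi_inv b)).

Definition p (th : T2) : R := fst (pi_inv th).

Definition brace (x : R) : R := if Rlt_dec x (1/2) then x else x - 1/2.

Definition U1 (u : R * R) : Prop :=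
  let a := fst u in let b := snd u in
  ((0 <= a < 1/2 /\ 1/2 <= b < 1) \/ (1/2 <= a < 1 /\ 0 <= b < 1/2))
  /\ a + b < 3/4.

Definition U2 (eps : R) (u : R * R) : Prop :=
  let a := fst u in let b := snd u in
  (0 <= a < 1/2 /\ 0 <= b < 1) /\ 3/4 + eps < a + b < 5/4.

Definition U (eps : R) (u : R * R) : Prop := U1 u \/ U2 eps u.

Definition S (eps : R) (th : T2) : Prop := exists u, U eps u /\ pi u = th.

(** Write [x], [z] for the representatives in [0,1)^2 of [thx], [thz], and
    [y1] for the first coordinate of [thy], so that [2 y1 = x1 + z1] modulo 1.
    Since [{.}] is reduction modulo 1/2, [{y1}] is [({x1} + {z1})/2] when [x1]
    and [z1] lie in the same half of [0,1), and then the left-hand side equals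
    [(x1 - z1)^2/2 = 2 d1^2] exactly (the parallelogram identity).  When they lie
    in different halves, [{y1}] is still [(x1 + z1)/2] provided [x1 + z1 < 1],
    and the inequality then holds with room to spare.
    Finally [d1 + d2] is half the difference of the coordinate sums of [z] and
    [x]; as the sums on [U1] and on [U2] are separated by [eps], both points
    lie in [U2] (first coordinates in [0,1/2)) or both in [U1] (first
    coordinates in [0,1/4) or [1/2,3/4)), and in either case the previous
    dichotomy applies. *)

From Stdlib Require Import Reals Lra.
Open Scope R_scope.

Lemma frac_part_id (r : R) : 0 <= r < 1 -> frac_part r = r.
Proof. intros Hr. symmetry. apply (Int_part_frac_part_spec r 0); simpl; lra. Qed.

Lemma frac_part_lt2 (s : R) :
  0 <= s < 2 -> frac_part s = s \/ frac_part s = s - 1.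
Proof.
  intros Hs. destruct (Rlt_le_dec s 1) as [Hlt | Hge].
  - left. apply frac_part_id. lra.
  - right. symmetry. apply (Int_part_frac_part_spec s 1); simpl; lra.
Qed.

Lemma pi_inv_pi (u : R * R) :
  0 <= fst u < 1 -> 0 <= snd u < 1 -> pi_inv (pi u) = u.
Proof.
  destruct u as [u1 u2]; simpl; intros H1 H2.
  unfold pi_inv; simpl. rewrite !frac_part_id by assumption. reflexivity.
Qed.

(** [y] is a solution of [2 y = a + b] in [R/Z], all three taken in [0,1). *)
Definition midpoint_mod1 (a b y : R) : Prop :=
  y + y = a + b \/ y + y = a + b + 1 \/ y + y = a + b - 1.

Lemma tadd_diag_midpoint (thx thy thz : T2) :
  tadd thy thy = tadd thx thz -> midpoint_mod1 (p thx) (p thz) (p thy).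
Proof.
  intros H. apply (f_equal t1) in H.
  destruct thx as [x1 x2 ? ? ? ?], thy as [y1 y2 ? ? ? ?], thz as [z1 z2 ? ? ? ?].
  unfold tadd, p, pi_inv in *; simpl in *.
  destruct (frac_part_lt2 (y1 + y1)), (frac_part_lt2 (x1 + z1));
    unfold midpoint_mod1; lra.
Qed.

Lemma p_range (th : T2) : 0 <= p th < 1.
Proof. exact (conj (t1_ge0 th) (t1_lt1 th)). Qed.

Definition same_half (a b : R) : Prop := a < 1/2 <-> b < 1/2.

Lemma brace_midpoint_same_half (a b y : R) :
  0 <= a < 1 -> 0 <= b < 1 -> 0 <= y < 1 -> midpoint_mod1 a b y ->
  same_half a b -> brace y = (brace a + brace b) / 2.
Proof.
  unfold midpoint_mod1, same_half, brace; intros Ha Hb Hy Hmid Hhalf.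
  destruct (Rlt_dec a (1/2)), (Rlt_dec b (1/2)), (Rlt_dec y (1/2)); lra.
Qed.

Lemma brace_midpoint_cross (a b y : R) :
  0 <= a < 1/2 -> 1/2 <= b < 1 -> 0 <= y < 1 -> midpoint_mod1 a b y ->
  a + b < 1 -> brace y = (a + b) / 2.
Proof.
  unfold midpoint_mod1, brace; intros Ha Hb Hy Hmid Hsum.
  destruct (Rlt_dec y (1/2)); lra.
Qed.

Lemma brace_defect_same_half (a b y : R) :
  0 <= a < 1 -> 0 <= b < 1 -> 0 <= y < 1 -> midpoint_mod1 a b y ->
  same_half a b ->
  (1 - brace a) ^ 2 + (1 - brace b) ^ 2 - 2 * (1 - brace y) ^ 2 = (b - a) ^ 2 / 2.
Proof.
  intros Ha Hb Hy Hmid Hhalf.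
  rewrite (brace_midpoint_same_half a b y) by assumption.
  assert (Hdiff : brace b - brace a = b - a).
  { unfold same_half, brace in *.
    destruct (Rlt_dec a (1/2)), (Rlt_dec b (1/2)); lra. }
  rewrite <- Hdiff. field.
Qed.

(** After expansion the difference of the two sides is [5/4 - b]. *)
Lemma brace_defect_cross (a b y : R) :
  0 <= a < 1/2 -> 1/2 <= b < 1 -> 0 <= y < 1 -> midpoint_mod1 a b y ->
  a + b < 1 ->
  (1 - brace a) ^ 2 + (1 - brace b) ^ 2 - 2 * (1 - brace y) ^ 2 >= (b - a) ^ 2 / 2.
Proof.
  intros Ha Hb Hy Hmid Hsum.
  rewrite (brace_midpoint_cross a b y) by assumption.
  unfold brace.
  destruct (Rlt_dec a (1/2)); [| lra].
  destruct (Rlt_dec b (1/2)); [lra |].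
  nra.
Qed.

Lemma brace_defect_ge (a b y : R) :
  0 <= a < 1 -> 0 <= b < 1 -> 0 <= y < 1 -> midpoint_mod1 a b y ->
  same_half a b \/ a + b < 1 ->
  (1 - brace a) ^ 2 + (1 - brace b) ^ 2 - 2 * (1 - brace y) ^ 2 >= (b - a) ^ 2 / 2.
Proof.
  intros Ha Hb Hy Hmid [Hhalf | Hsum].
  { rewrite brace_defect_same_half by assumption. lra. }
  destruct (Rlt_le_dec a (1/2)), (Rlt_le_dec b (1/2)); try lra.
  - rewrite brace_defect_same_half by (auto; unfold same_half; split; lra). lra.
  - apply brace_defect_cross; auto; lra.
  - assert (Hmid' : midpoint_mod1 b a y) by (unfold midpoint_mod1 in *; lra).
    pose proof (brace_defect_cross b a y ltac:(lra) ltac:(lra) Hy Hmid' ltac:(lra)).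
    lra.
Qed.

Lemma U1_sum_lt (u : R * R) : U1 u -> fst u + snd u < 3/4.
Proof. unfold U1. tauto. Qed.

Lemma U2_sum_gt (eps : R) (u : R * R) : U2 eps u -> 3/4 + eps < fst u + snd u.
Proof. unfold U2. tauto. Qed.

Lemma U1_fst (u : R * R) : U1 u -> 0 <= fst u < 1/4 \/ 1/2 <= fst u < 3/4.
Proof. unfold U1. lra. Qed.

Lemma U2_fst (eps : R) (u : R * R) : U2 eps u -> 0 <= fst u < 1/2.
Proof. unfold U2. lra. Qed.

Lemma U_unit_square (eps : R) (u : R * R) :
  U eps u -> 0 <= fst u < 1 /\ 0 <= snd u < 1.
Proof. unfold U, U1, U2. lra. Qed.

Lemma S_pi_inv (eps : R) (th : T2) : S eps th -> U eps (pi_inv th).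
Proof.
  intros [u [Hu <-]]. destruct (U_unit_square eps u Hu).
  rewrite pi_inv_pi by assumption. exact Hu.
Qed.

Lemma U_same_half_or_sum_lt1 (eps : R) (x z : R * R) :
  U eps x -> U eps z -> Rabs ((fst z + snd z) - (fst x + snd x)) < eps ->
  same_half (fst x) (fst z) \/ fst x + fst z < 1.
Proof.
  intros [Hx | Hx] [Hz | Hz] Hclose; apply Rabs_def2 in Hclose; unfold same_half.
  - destruct (U1_fst x Hx), (U1_fst z Hz); lra.
  - pose proof (U1_sum_lt x Hx). pose proof (U2_sum_gt eps z Hz). lra.
  - pose proof (U2_sum_gt eps x Hx). pose proof (U1_sum_lt z Hz). lra.
  - pose proof (U2_fst eps x Hx). pose proof (U2_fst eps z Hz). lra.
Qed.

Theorem proposition4p4 (eps : R) (heps : 0 < eps) (thx thy thz : T2)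
  (hx : S eps thx) (hz : S eps thz) (hy : tadd thy thy = tadd thx thz) :
  let d1 := (fst (pi_inv thz) - fst (pi_inv thx)) / 2 in
  let d2 := (snd (pi_inv thz) - snd (pi_inv thx)) / 2 in
  Rabs (d1 + d2) <= eps / 1000 ->
  (1 - brace (p thx)) ^ 2 + (1 - brace (p thz)) ^ 2
    - 2 * (1 - brace (p thy)) ^ 2 >= 2 * d1 ^ 2.
Proof.
  intros d1 d2 Hd.
  assert (Hclose : Rabs ((fst (pi_inv thz) + snd (pi_inv thz))
                         - (fst (pi_inv thx) + snd (pi_inv thx))) < eps).
  { replace (_ - _) with (2 * (d1 + d2)) by (unfold d1, d2; field).
    rewrite Rabs_mult, Rabs_right by lra. lra. }
  pose proof (U_same_half_or_sum_lt1 eps _ _ (S_pi_inv eps thx hx) (S_pi_inv eps thz hz) Hclose)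
    as Hcomp.
  pose proof (brace_defect_ge (p thx) (p thz) (p thy) (p_range thx) (p_range thz) (p_range thy)
                (tadd_diag_midpoint thx thy thz hy) Hcomp) as Hdefect.
  replace (2 * d1 ^ 2) with ((p thz - p thx) ^ 2 / 2) by (unfold d1, p; field).
  exact Hdefect.
Qed.
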